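(* Let $(\Omega,\mathcal{F},\mathbb{P})$ be a probability space, let $X_{n,m}\colon\Omega\to[0,1]$, $n,m\in\mathbb{N}$, be i.i.d. random variables that are continuous uniformly distributed on $[0,1]$, let $f\colon\mathbb{R}^2\to\mathbb{R}$ be given by $f(\theta)=\int_0^1|\theta_2\max(\theta_1x,0)-\sin(x)|^2\,dx$ for $\theta=(\theta_1,\theta_2)\in\mathbb{R}^2$, let $F\colon\mathbb{R}^2\times[0,1]\to\mathbb{R}$ be given by $F(\theta,x)=|\theta_2\max(\theta_1x,0)-\sin(x)|^2$, and let $\mathcal{M}=\{\theta\in\mathbb{R}^2\colon f(\theta)=\inf_{\vartheta\in\mathbb{R}^2}f(\vartheta)\}$. Then: $f(\theta)=\mathbb{E}[F(\theta,X_{1,1})]$ and $\mathbb{E}[|F(\theta,X_{1,1})|^2]<\infty$ for every $\theta\in\mathbb{R}^2$; for every $x\in[0,1]$ the map $\theta\mapsto F(\theta,x)$ is locally Lipschitz continuous; and there exists an open set $U\subseteq\mathbb{R}^2$ such that $f|_U$ is three times continuously differentiable, for every non-empty compact $\mathfrak{C}\subseteq U$ it holds that $\sup_{\theta\in\mathfrak{C}}\mathbb{E}[|F(\theta,X_{1,1})|^2+|(\nabla_\theta F)(\theta,X_{1,1})|^2]<\infty$, $\mathcal{M}\cap U$ is a non-empty $1$-dimensional $C^1$-submanifold of $\mathbb{R}^2$, and $\operatorname{rank}((\operatorname{Hess}f)(\theta))=1$ for every $\theta\in\mathcal{M}\cap U$.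
   Context: $\nabla_\theta F$ denotes the gradient of $F$ with respect to $\theta$. *)

From HB Require Import structures.
From mathcomp Require Import all_boot all_order all_algebra.
From mathcomp Require Import all_classical all_reals all_analysis.
Set Implicit Arguments. Unset Strict Implicit. Unset Printing Implicit Defensive.
Import Order.TTheory GRing.Theory Num.Theory.
Import numFieldNormedType.Exports.
Local Open Scope classical_set_scope.
Local Open Scope ring_scope.

Section defs.
Variable R : realType.

Definition lossF (theta : R * R) (x : R) : R :=
  (theta.2 * Num.max (theta.1 * x) 0 - sin x) ^+ 2.

Definition objf (theta : R * R) : R :=
  Rintegral lebesgue_measure `[0%R, 1%R] (lossF theta).

Definition partial1 (g : R * R -> R) (p : R * R) : R :=
  derive1 (fun t => g (t, p.2)) p.1.
Definition partial2 (g : R * R -> R) (p : R * R) : R :=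
  derive1 (fun t => g (p.1, t)) p.2.
Definition partial (i : 'I_2) (g : R * R -> R) : R * R -> R :=
  if val i == 0%N then partial1 g else partial2 g.

Fixpoint Ck (k : nat) (g : R * R -> R) (U : set (R * R)) : Prop :=
  {within U, continuous g} /\
  match k with
  | 0%N => True
  | k'.+1 =>
      (forall p, U p -> derivable (fun t => g (t, p.2)) p.1 1 /\
                        derivable (fun t => g (p.1, t)) p.2 1) /\
      Ck k' (partial1 g) U /\ Ck k' (partial2 g) U
  end.

Definition Ck2 (k : nat) (phi : R * R -> R * R) (U : set (R * R)) : Prop :=
  Ck k (fun p => (phi p).1) U /\ Ck k (fun p => (phi p).2) U.

Definition hessian (g : R * R -> R) (p : R * R) : 'M[R]_2 :=
  \matrix_(i < 2, j < 2) partial i (partial j g) p.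

Definition grad_sqnorm (g : R * R -> R) (p : R * R) : R :=
  partial1 g p ^+ 2 + partial2 g p ^+ 2.

Definition dist2 (a b : R * R) : R :=
  Num.sqrt ((a.1 - b.1) ^+ 2 + (a.2 - b.2) ^+ 2).

Definition locally_lipschitz (g : R * R -> R) : Prop :=
  forall p : R * R, exists2 e : R, 0 < e & exists L : R,
    forall a b, dist2 a p < e -> dist2 b p < e ->
      `|g a - g b| <= L * dist2 a b.

Definition C1_submanifold_dim1 (S : set (R * R)) : Prop :=
  forall p, S p ->
  exists (V W : set (R * R)) (phi psi : R * R -> R * R),
    [/\ (open V /\ V p /\ open W),
        (Ck2 1 phi V /\ Ck2 1 psi W),
        (forall q, V q -> W (phi q) /\ psi (phi q) = q),
        (forall w, W w -> V (psi w) /\ phi (psi w) = w) &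
        (forall q, V q -> (S q <-> (phi q).2 = 0))].

Definition mutually_independent d (T : measurableType d)
  (P : probability T R) (I : eqType) (X : I -> T -> R) : Prop :=
  forall (J : seq I) (A : I -> set R),
    uniq J -> (forall i, i \in J -> measurable (A i)) ->
    P (\bigcap_(i in [set i | i \in J]) (X i @^-1` A i)) =
    (\prod_(i <- J) P (X i @^-1` A i))%E.

End defs.

Set Warnings "-notation-overridden -ambiguous-paths -notation-incompatible-prefix -deprecated".
From HB Require Import structures.
From mathcomp Require Import all_boot all_order all_algebra.
From mathcomp Require Import all_classical all_reals all_analysis.
From mathcomp Require Import ring lra.
Set Implicit Arguments. Unset Strict Implicit. Unset Printing Implicit Defensive.
Import Order.TTheory GRing.Theory Num.Theory.
Import numFieldNormedType.Exports measurable_realfun.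
Local Open Scope classical_set_scope.
Local Open Scope ring_scope.

(* For x >= 0 and theta.1 > 0 the ReLU is the identity, so F(theta, x) =
   (theta.1 theta.2 x - sin x)^2 and f(theta) = a t^2 - 2 b t + c with
   t = theta.1 theta.2, a = int x^2, b = int x sin x, c = int sin^2 x; for
   theta.1 <= 0 one gets f(theta) = c.  As a, b > 0, f = a (t - b/a)^2 + c - b^2/a
   on theta.1 >= 0: the infimum c - b^2/a is attained on the half-plane
   theta.1 > 0 exactly along the hyperbola theta.1 theta.2 = b/a, which the chart
   (theta.1, theta.2) |-> (theta.1, theta.1 theta.2 - b/a) straightens.  There f
   is a polynomial in theta, and at its minimizers the mixed partial
   4 a t - 2 b equals 2 a t, so the Hessian is the rank-one matrix
   2 a (theta.2, theta.1)^T (theta.2, theta.1).  Since X_{1,1} is uniform on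
   [0, 1], expectations are integrals over [0, 1], and all integrands are
   bounded by polynomials in |theta|. *)

Section Laurent.
Variable R : realType.

Inductive laurent : (R * R -> R) -> Prop :=
| laurent_cst c : laurent (fun _ => c)
| laurent_fst : laurent (fun p => p.1)
| laurent_snd : laurent (fun p => p.2)
| laurent_fstV : laurent (fun p => p.1^-1)
| laurent_add f g : laurent f -> laurent g -> laurent (fun p => f p + g p)
| laurent_mul f g : laurent f -> laurent g -> laurent (fun p => f p * g p).

Lemma laurent_continuous h : laurent h ->
  forall p : R * R, p.1 != 0 -> {for p, continuous h}.
Proof.
elim=> [c| | | |f g _ IHf _ IHg|f g _ IHf _ IHg] p p1_neq0.
- exact: cvg_cst.
- exact: cvg_fst.
- exact: cvg_snd.
- by apply: (@continuousV _ _ (fun p : R * R => p.1)) => //; exact: cvg_fst.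
- exact: continuousD (IHf _ _) (IHg _ _).
- exact: continuousM (IHf _ _) (IHg _ _).
Qed.

Lemma laurent_is_derive1 h : laurent h -> exists2 h1, laurent h1 &
  forall p : R * R, p.1 != 0 -> is_derive p.1 1 (fun t => h (t, p.2)) (h1 p).
Proof.
elim=> [c| | | |f g _ [f1 lf1 df] _ [g1 lg1 dg]|f g lf [f1 lf1 df] lg [g1 lg1 dg]].
- by exists (fun _ => 0) => [|p _]; [exact: laurent_cst|exact: is_derive_cst].
- by exists (fun _ => 1) => [|p _]; [exact: laurent_cst|exact: is_derive_id].
- by exists (fun _ => 0) => [|p _]; [exact: laurent_cst|exact: is_derive_cst].
- exists (fun p => - 1 * (p.1^-1 * p.1^-1)) => [|[x y] /= x_neq0].
    by do !constructor.
  rewrite (_ : _ * _ = - x ^- 2 *: 1); first exact: is_deriveV (is_derive_id _ _).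
  by rewrite [RHS]/GRing.scale /= mulr1 mulN1r expr2 invfM.
- exists (fun p => f1 p + g1 p) => [|p p1_neq0]; first exact: laurent_add.
  exact: is_deriveD (df p p1_neq0) (dg p p1_neq0).
- exists (fun p => f p * g1 p + g p * f1 p) => [|[x y] x_neq0].
    by apply: laurent_add; apply: laurent_mul.
  by apply: is_derive_eq; first exact: is_deriveM (df _ x_neq0) (dg _ x_neq0).
Qed.

Lemma laurent_is_derive2 h : laurent h -> exists2 h2, laurent h2 &
  forall p : R * R, is_derive p.2 1 (fun t => h (p.1, t)) (h2 p).
Proof.
elim=> [c| | | |f g _ [f2 lf2 df] _ [g2 lg2 dg]|f g lf [f2 lf2 df] lg [g2 lg2 dg]].
- by exists (fun _ => 0) => [|p]; [exact: laurent_cst|exact: is_derive_cst].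
- by exists (fun _ => 0) => [|p]; [exact: laurent_cst|exact: is_derive_cst].
- by exists (fun _ => 1) => [|p]; [exact: laurent_cst|exact: is_derive_id].
- by exists (fun _ => 0) => [|p]; [exact: laurent_cst|exact: (is_derive_cst p.1^-1)].
- exists (fun p => f2 p + g2 p) => [|p]; first exact: laurent_add.
  exact: is_deriveD (df p) (dg p).
- exists (fun p => f p * g2 p + g p * f2 p) => [|[x y] /=].
    by apply: laurent_add; apply: laurent_mul.
  by apply: is_derive_eq; first exact: is_deriveM (df (x, y)) (dg (x, y)).
Qed.

Section OpenSet.
Variable V : set (R * R).
Hypothesis openV : open V.

Lemma near_line1 p : V p -> \forall t \near p.1, V (t, p.2).
Proof.
case: p => x y Vxy; have nbhsV : nbhs (x, y) V by move: openV; rewrite openE; apply.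
exact: (cvg_pair cvg_id (cvg_cst y)) nbhsV.
Qed.

Lemma near_line2 p : V p -> \forall t \near p.2, V (p.1, t).
Proof.
case: p => x y Vxy; have nbhsV : nbhs (x, y) V by move: openV; rewrite openE; apply.
exact: (cvg_pair (cvg_cst x) cvg_id) nbhsV.
Qed.

Section EqOn.
Variables g h : R * R -> R.
Hypothesis eq_gh : forall q, V q -> g q = h q.

Lemma near_eq_line1 p : V p -> {near p.1, (fun t => g (t, p.2)) =1 (fun t => h (t, p.2))}.
Proof.
by move=> Vp; near=> t; apply: eq_gh; near: t; exact: near_line1.
Unshelve. all: by end_near. Qed.

Lemma near_eq_line2 p : V p -> {near p.2, (fun t => g (p.1, t)) =1 (fun t => h (p.1, t))}.
Proof.
by move=> Vp; near=> t; apply: eq_gh; near: t; exact: near_line2.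
Unshelve. all: by end_near. Qed.

Lemma eq_in_partial1 p : V p -> partial1 g p = partial1 h p.
Proof. by move=> Vp; rewrite /partial1 !derive1E; apply: near_eq_derive; exact: near_eq_line1. Qed.

Lemma eq_in_partial2 p : V p -> partial2 g p = partial2 h p.
Proof. by move=> Vp; rewrite /partial2 !derive1E; apply: near_eq_derive; exact: near_eq_line2. Qed.

Lemma eq_in_partial i p : V p -> partial i g p = partial i h p.
Proof. by rewrite /partial; case: ifP => _; [exact: eq_in_partial1|exact: eq_in_partial2]. Qed.

Lemma eq_in_continuous : {within V, continuous h} -> {within V, continuous g}.
Proof.
rewrite !continuous_open_subspace // => ch p /set_mem Vp.
have near_gh : {near p, h =1 g}.
  by move: openV; rewrite openE => /(_ p Vp); apply: filterS => q /eq_gh.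
by rewrite /continuous_at eq_gh //; apply: cvg_trans (ch p (mem_set Vp)); exact: near_eq_cvg near_gh.
Qed.

End EqOn.

Lemma eq_in_Ck k g h : (forall q, V q -> g q = h q) -> Ck k h V -> Ck k g V.
Proof.
elim: k g h => [|k IHk] g h eq_gh /= [ch Dh]; split=> //; try exact: eq_in_continuous ch.
have eq_hg q : V q -> h q = g q by move/eq_gh.
case: Dh => dh [c1 c2]; split; last split.
- move=> p Vp; have [d1 d2] := dh p Vp.
  by split; [exact: near_eq_derivable (near_eq_line1 eq_hg Vp) d1
            |exact: near_eq_derivable (near_eq_line2 eq_hg Vp) d2].
- by apply: IHk c1 => p; exact: eq_in_partial1.
- by apply: IHk c2 => p; exact: eq_in_partial2.
Qed.

Lemma laurent_Ck k f : (forall p, V p -> p.1 != 0) -> laurent f -> Ck k f V.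
Proof.
move=> V_neq0.
have cont g : laurent g -> {within V, continuous g}.
  move=> lg; rewrite continuous_open_subspace // => p /set_mem Vp.
  exact: laurent_continuous lg _ (V_neq0 _ Vp).
elim: k f => [|k IHk] f lf /=; split=> //; try exact: cont.
have [f1 lf1 df1] := laurent_is_derive1 lf; have [f2 lf2 df2] := laurent_is_derive2 lf.
split; last split.
- move=> p Vp; have ? := df1 p (V_neq0 _ Vp); have ? := df2 p.
  by split; exact: ex_derive.
- apply: eq_in_Ck (IHk _ lf1) => p Vp; have ? := df1 p (V_neq0 _ Vp).
  by rewrite /partial1 derive1E derive_val.
- apply: eq_in_Ck (IHk _ lf2) => p Vp; have ? := df2 p.
  by rewrite /partial2 derive1E derive_val.
Qed.

End OpenSet.

Lemma partial1_quadratic g (a b c x y : R) :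
  (forall t, g (t, y) = a * t ^+ 2 + b * t + c) -> partial1 g (x, y) = 2 * a * x + b.
Proof.
move=> gE; rewrite /partial1 /=.
have -> : (fun t => g (t, y)) = (fun t => a * t ^+ 2 + b * t + c) by apply/funext.
by rewrite derive1E derive_val /GRing.scale /=; ring.
Qed.

Lemma partial2_quadratic g (a b c x y : R) :
  (forall t, g (x, t) = a * t ^+ 2 + b * t + c) -> partial2 g (x, y) = 2 * a * y + b.
Proof.
move=> gE; rewrite /partial2 /=.
have -> : (fun t => g (x, t)) = (fun t => a * t ^+ 2 + b * t + c) by apply/funext.
by rewrite derive1E derive_val /GRing.scale /=; ring.
Qed.

End Laurent.

Section ContinuousReal.
Variable R : realType.
Implicit Types f g : R -> R.

Lemma continuous_addf f g : continuous f -> continuous g -> continuous (fun x => f x + g x).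
Proof. by move=> cf cg x; apply: continuousD; [exact: cf|exact: cg]. Qed.

Lemma continuous_mulf f g : continuous f -> continuous g -> continuous (fun x => f x * g x).
Proof. by move=> cf cg x; apply: continuousM; [exact: cf|exact: cg]. Qed.

Lemma continuous_oppf f : continuous f -> continuous (fun x => - f x).
Proof. by move=> cf x; apply: continuousN; exact: cf. Qed.

Lemma continuous_sqrf f : continuous f -> continuous (fun x => f x ^+ 2).
Proof.
move=> cf; rewrite (_ : (fun x => f x ^+ 2) = fun x => f x * f x); last first.
  by apply/funext => x; rewrite expr2.
exact: continuous_mulf.
Qed.

Lemma continuous_maxf f g : continuous f -> continuous g ->
  continuous (fun x => Num.max (f x) (g x)).
Proof. by move=> cf cg x; apply: continuous_max; [exact: cf|exact: cg]. Qed.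

End ContinuousReal.

Ltac continuity := repeat first
  [ apply: continuous_addf | apply: continuous_mulf | apply: continuous_oppf
  | apply: continuous_sqrf | apply: continuous_maxf | exact: continuous_sin
  | exact: cst_continuous | by move=> ?; exact: cvg_id ].

Section Objective.
Variable R : realType.
Local Notation mu := (@lebesgue_measure R).

Lemma continuous_integrable (f : R -> R) (a b : R) :
  continuous f -> mu.-integrable `[a, b] (EFin \o f).
Proof.
move=> cf; apply: continuous_compact_integrable; first exact: segment_compact.
exact: continuous_subspaceT.
Qed.

Lemma RintegralD_continuous (f g : R -> R) (a b : R) : continuous f -> continuous g ->
  \int[mu]_(x in `[a, b]) (f x + g x) = \int[mu]_(x in `[a, b]) f x + \int[mu]_(x in `[a, b]) g x.
Proof. by move=> cf cg; rewrite RintegralD //; exact: continuous_integrable. Qed.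

Lemma RintegralZl_continuous (f : R -> R) (r a b : R) : continuous f ->
  \int[mu]_(x in `[a, b]) (r * f x) = r * \int[mu]_(x in `[a, b]) f x.
Proof. by move=> cf; rewrite RintegralZl //; exact: continuous_integrable. Qed.

Lemma Rintegral_ge_subitv (f : R -> R) (a c b m : R) : a <= c < b -> continuous f ->
  (forall x, a <= x <= b -> 0 <= f x) -> (forall x, c <= x <= b -> m <= f x) ->
  (b - c) * m <= \int[mu]_(x in `[a, b]) f x.
Proof.
move=> /andP[ac cb] cf f_ge0 f_gem.
have bnd_ac : (BLeft a <= BLeft c)%O by rewrite bnd_simp.
have bnd_cb : (BLeft c <= BRight b)%O by rewrite bnd_simp ltW.
rewrite (itv_bndbnd_setU bnd_ac bnd_cb) Rintegral_setU //; first last.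
- by apply/disj_setPS => x [/=]; rewrite !in_itv /= => /andP[_ xc] /andP[cx _]; lra.
- by rewrite -itv_bndbnd_setU //; exact: continuous_integrable cf.
have int_ac_ge0 : 0 <= \int[mu]_(x in `[a, c[) f x.
  by apply: Rintegral_ge0 => x /=; rewrite in_itv /= => /andP[ax xc]; apply: f_ge0; lra.
apply: ler_wpDl int_ac_ge0 _.
have mu_cb : fine (mu `[c, b]) = b - c by rewrite lebesgue_measure_itv /= lte_fin cb.
rewrite -mu_cb mulrC -Rintegral_cst //; apply: le_Rintegral => //.
- exact/continuous_integrable/cst_continuous.
- exact: continuous_integrable cf.
Qed.

Definition quad_a : R := \int[mu]_(x in `[0, 1]) x ^+ 2.
Definition quad_b : R := \int[mu]_(x in `[0, 1]) (x * sin x).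
Definition quad_c : R := \int[mu]_(x in `[0, 1]) sin x ^+ 2.

Lemma quad_a_gt0 : 0 < quad_a.
Proof.
apply: lt_le_trans (@Rintegral_ge_subitv (fun x => x ^+ 2) 0 2^-1 1 4^-1 _ _ _ _).
- lra.
- by apply/andP; split; lra.
- by continuity.
- by move=> x _; exact: sqr_ge0.
- by move=> x /andP[x_ge x_le]; rewrite expr2; nra.
Qed.

Lemma quad_b_gt0 : 0 < quad_b.
Proof.
have sin_half_gt0 : 0 < sin (2^-1 : R) by apply: sin2_gt0; lra.
have sin_ge_sin_half (x : R) : 2^-1 <= x <= 1 -> sin 2^-1 <= sin x.
  move=> /andP[x_ge x_le]; have pihalf_ge1 := @pihalf_ge1 R.
  by rewrite leNgt ltr_sin ?in_itv /= -?leNgt //; apply/andP; split; lra.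
apply: lt_le_trans (@Rintegral_ge_subitv (fun x => x * sin x) 0 2^-1 1 (2^-1 * sin 2^-1) _ _ _ _).
- by apply: mulr_gt0; [lra|apply: mulr_gt0 => //; lra].
- by apply/andP; split; lra.
- by continuity.
- move=> x /andP[x_ge0 x_le1]; apply: mulr_ge0 => //.
  by apply: sin_ge0_pi; have := @pi_ge2 R; lra.
- move=> x /[dup] /andP[x_ge x_le] /sin_ge_sin_half sin_ge.
  by apply: ler_pM; [lra|exact: ltW|lra|exact: sin_ge].
Qed.

Lemma objf_fst_ge0 theta : 0 <= theta.1 ->
  objf theta = quad_a * (theta.1 * theta.2) ^+ 2 - 2 * quad_b * (theta.1 * theta.2) + quad_c.
Proof.
move=> theta1_ge0; set t := theta.1 * theta.2.
rewrite /objf (@eq_Rintegral _ _ _ mu _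
  (fun x => t ^+ 2 * x ^+ 2 + - (2 * t) * (x * sin x) + sin x ^+ 2)); last first.
  move=> x; rewrite inE /= in_itv /= => /andP[x_ge0 _].
  by rewrite /lossF max_l ?mulr_ge0 // /t; ring.
rewrite !RintegralD_continuous ?RintegralZl_continuous; try by continuity.
by rewrite /quad_a /quad_b /quad_c; ring.
Qed.

Lemma objf_fst_le0 theta : theta.1 <= 0 -> objf theta = quad_c.
Proof.
move=> theta1_le0; apply: eq_Rintegral => x; rewrite inE /= in_itv /= => /andP[x_ge0 _].
by rewrite /lossF max_r ?mulr_le0_ge0 // mulr0 sub0r sqrrN.
Qed.

Definition argmin_prod : R := quad_b / quad_a.
Definition min_objf : R := quad_c - quad_b * argmin_prod.

Lemma quad_a_neq0 : quad_a != 0. Proof. exact: lt0r_neq0 quad_a_gt0. Qed.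

Lemma argmin_prod_gt0 : 0 < argmin_prod.
Proof. exact: divr_gt0 quad_b_gt0 quad_a_gt0. Qed.

Lemma objf_fst_ge0_sqr theta : 0 <= theta.1 ->
  objf theta = quad_a * (theta.1 * theta.2 - argmin_prod) ^+ 2 + min_objf.
Proof.
by move=> theta1_ge0; rewrite objf_fst_ge0 // /min_objf /argmin_prod; field; exact: quad_a_neq0.
Qed.

Lemma min_objf_le theta : min_objf <= objf theta.
Proof.
have [theta1_gt0|theta1_le0] := ltrP 0 theta.1.
  rewrite (objf_fst_ge0_sqr (ltW theta1_gt0)) lerDr.
  exact: mulr_ge0 (ltW quad_a_gt0) (sqr_ge0 _).
rewrite objf_fst_le0 // /min_objf gerBl.
exact: mulr_ge0 (ltW quad_b_gt0) (ltW argmin_prod_gt0).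
Qed.

Lemma inf_objf : inf (range (@objf R)) = min_objf.
Proof.
have objf_argmin : objf (1, argmin_prod) = min_objf.
  by rewrite objf_fst_ge0_sqr //= mul1r subrr expr0n /= mulr0 add0r.
apply/eqP; rewrite eq_le; apply/andP; split.
- rewrite -objf_argmin; apply: ge_inf; last by exists (1, argmin_prod).
  by exists min_objf => _ [theta _ <-]; exact: min_objf_le.
- apply: lb_le_inf; first by exists (objf (1, argmin_prod)), (1, argmin_prod).
  by move=> _ [theta _ <-]; exact: min_objf_le.
Qed.

Definition halfplane : set (R * R) := [set p | 0 < p.1].

Lemma open_halfplane : open halfplane.
Proof.
have -> : halfplane = fst @^-1` [set x | 0 < x] by [].
by apply: open_comp; [move=> p _; exact: cvg_fst|exact: open_gt].
Qed.

Lemma argmin_objf_halfplane :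
  [set theta | objf theta = inf (range (@objf R))] `&` halfplane =
  [set p | 0 < p.1 /\ p.1 * p.2 = argmin_prod].
Proof.
apply/seteqP; split=> p /=; rewrite inf_objf.
- move=> [+ p1_gt0]; rewrite (objf_fst_ge0_sqr (ltW p1_gt0)) => /eqP.
  by rewrite -subr_eq0 addrK mulf_eq0 (negbTE quad_a_neq0) sqrf_eq0 subr_eq0 => /eqP.
- move=> [p1_gt0 p_argmin]; split => //.
  by rewrite (objf_fst_ge0_sqr (ltW p1_gt0)) p_argmin subrr expr0n mulr0 add0r.
Qed.

Definition objf_poly (p : R * R) : R :=
  quad_a * (p.1 * p.2) ^+ 2 + (- 2 * quad_b) * (p.1 * p.2) + quad_c.

Lemma objf_halfplane p : halfplane p -> objf p = objf_poly p.
Proof. by move=> p1_gt0; rewrite (objf_fst_ge0 (ltW p1_gt0)) /objf_poly; ring. Qed.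

Lemma objf_C3 : Ck 3 (@objf R) halfplane.
Proof.
apply: eq_in_Ck objf_halfplane _; first exact: open_halfplane.
apply: laurent_Ck; first exact: open_halfplane.
  by move=> p /lt0r_neq0.
by rewrite /objf_poly; do !constructor.
Qed.

End Objective.

Arguments halfplane {R}.

Lemma rank_outer (F : fieldType) n (u v : 'rV[F]_n) :
  u != 0 -> v != 0 -> \rank (u^T *m v) = 1%N.
Proof.
move=> u_neq0 v_neq0.
have v_free : row_free v by rewrite /row_free rank_rV v_neq0.
by rewrite mxrankMfree // mxrank_tr rank_rV u_neq0.
Qed.

Section Hessian.
Variable R : realType.

Definition grad_prod (p : R * R) : 'rV[R]_2 := \row_j (if val j == 0%N then p.2 else p.1).

Lemma partial1_objf_poly :
  partial1 (@objf_poly R) = fun p => 2 * (quad_a R * p.2 ^+ 2) * p.1 + - 2 * quad_b R * p.2.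
Proof.
apply/funext => -[x y] /=.
rewrite (@partial1_quadratic _ _ (quad_a R * y ^+ 2) (- 2 * quad_b R * y) (quad_c R)) //.
by move=> t; rewrite /objf_poly /=; ring.
Qed.

Lemma partial2_objf_poly :
  partial2 (@objf_poly R) = fun p => 2 * (quad_a R * p.1 ^+ 2) * p.2 + - 2 * quad_b R * p.1.
Proof.
apply/funext => -[x y] /=.
rewrite (@partial2_quadratic _ _ (quad_a R * x ^+ 2) (- 2 * quad_b R * x) (quad_c R)) //.
by move=> t; rewrite /objf_poly /=; ring.
Qed.

Lemma hessian_objf_argmin p : 0 < p.1 -> p.1 * p.2 = argmin_prod R ->
  hessian (@objf R) p = (2 * quad_a R *: grad_prod p)^T *m grad_prod p.
Proof.
case: p => x y /= x_gt0 xy_argmin.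
have b_eq : quad_b R = quad_a R * (x * y).
  by rewrite xy_argmin /argmin_prod; field; exact: quad_a_neq0.
have partial_objf i q : halfplane q -> partial i (@objf R) q = partial i (@objf_poly R) q.
  by move=> hq; rewrite (eq_in_partial (@open_halfplane R) (@objf_halfplane R) i hq).
apply/matrixP => i j; rewrite !mxE big_ord1 !mxE.
have xy_halfplane : halfplane (x, y) by [].
rewrite (eq_in_partial (@open_halfplane R) (partial_objf j) i xy_halfplane) /partial.
case: i j => [[|[|//]] _] [[|[|//]] _] /=;
  rewrite ?partial1_objf_poly ?partial2_objf_poly.
- rewrite (@partial1_quadratic _ _ 0 (2 * (quad_a R * y ^+ 2)) (- 2 * quad_b R * y)) //.
  + by ring.
  + by move=> t /=; ring.
- rewrite (@partial1_quadratic _ _ (2 * quad_a R * y) (- 2 * quad_b R) 0) //.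
  + by rewrite b_eq; ring.
  + by move=> t /=; ring.
- rewrite (@partial2_quadratic _ _ (2 * quad_a R * x) (- 2 * quad_b R) 0) //.
  + by rewrite b_eq; ring.
  + by move=> t /=; ring.
- rewrite (@partial2_quadratic _ _ 0 (2 * (quad_a R * x ^+ 2)) (- 2 * quad_b R * x)) //.
  + by ring.
  + by move=> t /=; ring.
Qed.

Lemma rank_hessian_objf_argmin p : 0 < p.1 -> p.1 * p.2 = argmin_prod R ->
  \rank (hessian (@objf R) p) = 1%N.
Proof.
move=> p1_gt0 p_argmin; rewrite hessian_objf_argmin //.
have grad_neq0 : grad_prod p != 0.
  by apply/negP => /eqP/matrixP/(_ 0 1); rewrite !mxE /= => p1_eq0; move: p1_gt0; rewrite p1_eq0 ltxx.
apply: rank_outer => //.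
by rewrite scaler_eq0 negb_or grad_neq0 andbT mulf_neq0 ?quad_a_neq0.
Qed.

End Hessian.

Section Submanifold.
Variable R : realType.

Lemma hyperbola_C1_submanifold (k : R) :
  C1_submanifold_dim1 [set p : R * R | 0 < p.1 /\ p.1 * p.2 = k].
Proof.
have laurentC1 f : laurent f -> Ck 1 f (@halfplane R).
  by apply: laurent_Ck; [exact: open_halfplane|move=> p /lt0r_neq0].
move=> p [p1_gt0 _].
exists (@halfplane R), (@halfplane R),
  (fun q => (q.1, q.1 * q.2 + - k)), (fun w => (w.1, (w.2 + k) * w.1^-1)).
split.
- by split; [exact: open_halfplane|split; [exact: p1_gt0|exact: open_halfplane]].
- by split; split; apply: laurentC1; do !constructor.
- move=> [x y] /= x_gt0; split=> //.
  by congr pair; field; exact: lt0r_neq0.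
- move=> [x y] /= x_gt0; split=> //.
  by congr pair; field; exact: lt0r_neq0.
- move=> [x y] /= x_gt0; split=> [[_ ->]|/eqP]; first exact: addrN.
  by rewrite addr_eq0 opprK => /eqP.
Qed.

End Submanifold.

Section Loss.
Variable R : realType.
Implicit Types (theta : R * R) (x : R).

Definition residual theta x : R := theta.2 * Num.max (theta.1 * x) 0 - sin x.

Lemma lossFE theta x : lossF theta x = residual theta x ^+ 2.
Proof. by []. Qed.

Lemma continuous_lossF theta : continuous (lossF theta).
Proof. by rewrite /lossF; continuity. Qed.

Lemma sqr_le_norm (z c : R) : `|z| <= c -> z ^+ 2 <= c ^+ 2.
Proof. by rewrite ler_norml => /andP[z_ge z_le]; rewrite !expr2; nra. Qed.

Lemma norm_max0_le (a : R) : `|Num.max a 0| <= `|a|.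
Proof. by rewrite maxEle; case: ifP => _; rewrite ?normr0 ?normr_ge0. Qed.

Lemma norm_max0B_le (a b : R) : `|Num.max a 0 - Num.max b 0| <= `|a - b|.
Proof.
case: (lerP a 0) => a0; case: (lerP b 0) => b0.
- by rewrite subrr normr0 normr_ge0.
- by rewrite sub0r normrN (gtr0_norm b0) ltr0_norm; lra.
- by rewrite subr0 (gtr0_norm a0) gtr0_norm; lra.
- by [].
Qed.

Lemma norm_residual_le theta x : `|x| <= 1 ->
  `|residual theta x| <= `|theta.1| * `|theta.2| + 1.
Proof.
move=> x_le1; apply: le_trans (ler_normB _ _) _; apply: lerD; last exact: sin_max.
rewrite normrM mulrC ler_wpM2r //; apply: le_trans (norm_max0_le _) _.
by rewrite normrM ler_piMr.
Qed.

Lemma lossF_halfplane x theta : 0 <= x -> 0 < theta.1 ->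
  lossF theta x = (theta.1 * theta.2 * x - sin x) ^+ 2.
Proof.
by move=> x_ge0 theta1_gt0; rewrite /lossF max_l; [ring|exact: mulr_ge0 (ltW theta1_gt0) x_ge0].
Qed.

Lemma grad_sqnorm_lossF x theta : 0 <= x -> 0 < theta.1 ->
  let r := theta.1 * theta.2 * x - sin x in
  grad_sqnorm (fun th => lossF th x) theta = (2 * (theta.2 * x) * r) ^+ 2 + (2 * (theta.1 * x) * r) ^+ 2.
Proof.
move=> x_ge0 theta1_gt0 r.
have lossF_eq q : halfplane q -> lossF q x = (q.1 * q.2 * x - sin x) ^+ 2.
  exact: lossF_halfplane.
rewrite /grad_sqnorm (eq_in_partial1 (@open_halfplane R) lossF_eq theta1_gt0).
rewrite (eq_in_partial2 (@open_halfplane R) lossF_eq theta1_gt0) /r.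
case: theta theta1_gt0 {r} => s t /= _.
rewrite (@partial1_quadratic _ _ ((t * x) ^+ 2) (- 2 * sin x * (t * x)) (sin x ^+ 2)); last first.
  by move=> u /=; ring.
rewrite (@partial2_quadratic _ _ ((s * x) ^+ 2) (- 2 * sin x * (s * x)) (sin x ^+ 2)); last first.
  by move=> u /=; ring.
by congr (_ ^+ 2 + _ ^+ 2); ring.
Qed.

Lemma sqr_lossF_grad_le (B x : R) theta : 0 <= x <= 1 -> 0 < theta.1 ->
  `|theta.1| <= B -> `|theta.2| <= B ->
  lossF theta x ^+ 2 + grad_sqnorm (fun th => lossF th x) theta <= 9 * (B ^+ 2 + 1) ^+ 4.
Proof.
move=> /andP[x_ge0 x_le1] theta1_gt0 theta1_le theta2_le.
rewrite grad_sqnorm_lossF // lossF_halfplane //.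
set r := _ - sin x; set c := B ^+ 2 + 1.
have x_norm : `|x| <= 1 by rewrite ger0_norm.
have B_le_c : B <= c by rewrite /c; nra.
have coord_x_le (a : R) : `|a| <= B -> (a * x) ^+ 2 <= c ^+ 2.
  move=> a_le; apply: sqr_le_norm; rewrite normrM.
  by apply: le_trans B_le_c; rewrite -[B]mulr1 ler_pM.
have r_le : r ^+ 2 <= c ^+ 2.
  apply: sqr_le_norm; apply: le_trans (ler_normB _ _) _; apply: lerD; last exact: sin_max.
  have theta12_le : `|theta.1| * `|theta.2| <= B * B by rewrite ler_pM.
  by rewrite !normrM -[B ^+ 2]mulr1 expr2 ler_pM ?mulr_ge0.
have := coord_x_le _ theta1_le; have := coord_x_le _ theta2_le.
have := sqr_ge0 r; have := sqr_ge0 (theta.1 * x); have := sqr_ge0 (theta.2 * x).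
rewrite !exprMn; nra.
Qed.

Lemma normB_fst_le_dist2 (a b : R * R) : `|a.1 - b.1| <= dist2 a b.
Proof. by rewrite /dist2 -(sqrtr_sqr (a.1 - b.1)) ler_wsqrtr // lerDl sqr_ge0. Qed.

Lemma normB_snd_le_dist2 (a b : R * R) : `|a.2 - b.2| <= dist2 a b.
Proof. by rewrite /dist2 -(sqrtr_sqr (a.2 - b.2)) ler_wsqrtr // lerDr sqr_ge0. Qed.

Lemma residual_lipschitz (B x : R) (a b : R * R) : `|x| <= 1 ->
  `|a.2| <= B -> `|b.1| <= B ->
  `|residual a x - residual b x| <= B *+ 2 * dist2 a b.
Proof.
move=> x_le1 a2_le b1_le.
have -> : residual a x - residual b x =
    a.2 * (Num.max (a.1 * x) 0 - Num.max (b.1 * x) 0) + Num.max (b.1 * x) 0 * (a.2 - b.2).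
  by rewrite /residual; ring.
apply: le_trans (ler_normD _ _) _; rewrite mulr2n mulrDl !normrM.
apply: lerD; apply: ler_pM => //.
- apply: le_trans (norm_max0B_le _ _) _; rewrite -mulrBl normrM.
  by apply: le_trans _ (normB_fst_le_dist2 a b); rewrite ler_piMr.
- by apply: le_trans (norm_max0_le _) _; rewrite normrM (le_trans _ b1_le) // ler_piMr.
- exact: normB_snd_le_dist2.
Qed.

Lemma lossF_locally_lipschitz x : 0 <= x <= 1 -> locally_lipschitz (fun theta => lossF theta x).
Proof.
move=> /andP[x_ge0 x_le1] p; have x_norm : `|x| <= 1 by rewrite ger0_norm.
set B := `|p.1| + `|p.2| + 1.
have near_p_le (a : R * R) : dist2 a p < 1 -> `|a.1| <= B /\ `|a.2| <= B.
  move=> a_near; have := normB_fst_le_dist2 a p; have := normB_snd_le_dist2 a p.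
  have := ler_normD (a.1 - p.1) p.1; have := ler_normD (a.2 - p.2) p.2.
  rewrite !subrK /B; have := normr_ge0 p.1; have := normr_ge0 p.2; split; lra.
exists 1 => //; exists ((B * B + 1) *+ 2 * (B *+ 2)) => a b a_near b_near.
have [a1_le a2_le] := near_p_le a a_near; have [b1_le b2_le] := near_p_le b b_near.
have residual_le (q : R * R) : `|q.1| <= B -> `|q.2| <= B -> `|residual q x| <= B * B + 1.
  by move=> q1_le q2_le; apply: le_trans (norm_residual_le q x_norm) _; rewrite lerD2r ler_pM.
have sum_le : `|residual a x + residual b x| <= (B * B + 1) *+ 2.
  by apply: le_trans (ler_normD _ _) _; rewrite mulr2n lerD ?residual_le.
have -> : (B * B + 1) *+ 2 * (B *+ 2) * dist2 a b = B *+ 2 * dist2 a b * ((B * B + 1) *+ 2).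
  by ring.
rewrite !lossFE subr_sqr normrM; apply: ler_pM; rewrite ?normr_ge0 //.
exact: residual_lipschitz.
Qed.

End Loss.

Section Expectation.
Variables (R : realType) (d : measure_display) (Omega : measurableType d).
Variable P : probability Omega R.
Local Notation mu := (@lebesgue_measure R).

Lemma expectation_le_cst (g : Omega -> R) (K : R) : measurable_fun setT g ->
  (forall w, 0 <= g w) -> (forall w, g w <= K) -> ('E_P[g] <= K%:E)%E.
Proof.
move=> mg g_ge0 g_le; rewrite unlock.
have -> : K%:E = (\int[P]_w (cst K%:E w))%E by rewrite integral_cst //= probability_setT mule1.
apply: ge0_le_integral => //.
- by move=> w _; rewrite lee_fin.
- exact/measurable_EFinP.
- by move=> w _; rewrite lee_fin.
Qed.

Variable Y : Omega -> R.
Hypothesis mY : measurable_fun setT Y.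
Hypothesis Y01 : forall w, 0 <= Y w <= 1.
Hypothesis Y_uniform :
  forall A : set R, measurable A -> P (Y @^-1` A) = uniform_prob (@ltr01 R) A.

Lemma expectation_uniform01 (f : R -> R) : continuous f -> (forall x, 0 <= f x) ->
  ('E_P[fun w => f (Y w)] = (\int[mu]_(x in `[0, 1]) f x)%:E)%E.
Proof.
move=> cf f_ge0.
have mf : measurable_fun (T := measurableTypeR R) setT (EFin \o f).
  by apply/measurable_EFinP; exact: continuous_measurable_fun.
have mY' : measurable_fun (T := Omega) (U := measurableTypeR R) setT Y := mY.
pose Yrv : {RV P >-> measurableTypeR R} :=
  HB.pack (Y : Omega -> measurableTypeR R) (isMeasurableFun.Build _ _ _ _ _ mY').
rewrite unlock; transitivity (\int[distribution P Yrv]_y (f y)%:E)%E.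
  by rewrite ge0_integral_distribution // => y; rewrite lee_fin.
rewrite (eq_measure_integral (uniform_prob (@ltr01 R))); last by move=> A mA _; exact: Y_uniform.
rewrite integral_uniform //.
rewrite subr0 invr1 mul1e /Rintegral fineK //.
exact/integrable_fin_num/continuous_integrable.
Qed.

Lemma expectation_lossF theta : ('E_P[fun w => lossF theta (Y w)] = (objf theta)%:E)%E.
Proof. by rewrite /objf; apply: expectation_uniform01 => [|x]; [exact: continuous_lossF|exact: sqr_ge0]. Qed.

Lemma expectation_sqr_lossF_lty theta : ('E_P[fun w => (lossF theta (Y w) ^+ 2)%R] < +oo)%E.
Proof.
set c := (`|theta.1| * `|theta.2| + 1) ^+ 2.
apply: le_lt_trans (ltry (c ^+ 2)); apply: expectation_le_cst => [|w|w].
- rewrite (_ : (fun w => _) = (fun x => lossF theta x ^+ 2) \o Y) //.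
  apply: measurableT_comp mY; apply: continuous_measurable_fun.
  by apply: continuous_sqrf; exact: continuous_lossF.
- exact: sqr_ge0.
- rewrite sqr_le_norm // ger0_norm ?sqr_ge0 // lossFE sqr_le_norm //.
  by apply: norm_residual_le; case/andP: (Y01 w) => Y_ge0 Y_le1; rewrite ger0_norm.
Qed.

Lemma sup_expectation_sqr_lossF_grad_lty (C : set (R * R)) : compact C -> C `<=` @halfplane R ->
  (ereal_sup [set 'E_P[fun w => (lossF theta (Y w) ^+ 2 +
                 grad_sqnorm (fun th => lossF th (Y w)) theta)%R] | theta in C] < +oo)%E.
Proof.
move=> compactC C_halfplane; have [M [_ M_bnd]] := compact_bounded compactC.
set B := `|M| + 1.
have C_bnd theta : C theta -> `|theta.1| <= B /\ `|theta.2| <= B.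
  move=> Ctheta; have /M_bnd/(_ theta Ctheta) : M < B by rewrite /B; have := ler_norm M; lra.
  by rewrite /= prod_normE ge_max => /andP[].
apply: le_lt_trans (ltry (9 * (B ^+ 2 + 1) ^+ 4)); apply: ge_ereal_sup => _ [theta Ctheta <-].
have theta1_gt0 : 0 < theta.1 := C_halfplane _ Ctheta.
apply: expectation_le_cst => [|w|w].
- pose G x := lossF theta x ^+ 2 + ((2 * (theta.2 * x) * (theta.1 * theta.2 * x - sin x)) ^+ 2 +
    (2 * (theta.1 * x) * (theta.1 * theta.2 * x - sin x)) ^+ 2).
  rewrite (_ : (fun w => _) = G \o Y); last first.
    by apply/funext => w; rewrite /= grad_sqnorm_lossF //; case/andP: (Y01 w).
  apply: measurableT_comp mY; apply: continuous_measurable_fun.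
  by rewrite /G /lossF; continuity.
- by rewrite /grad_sqnorm !addr_ge0 ?sqr_ge0.
- have [theta1_le theta2_le] := C_bnd theta Ctheta.
  exact: sqr_lossF_grad_le.
Qed.

End Expectation.

Theorem proposition7p2 (R : realType) (d : measure_display)
  (Omega : measurableType d) (P : probability Omega R)
  (X : nat -> nat -> Omega -> R) :
  (forall n m, measurable_fun setT (X n m)) ->
  (forall n m w, 0 <= X n m w <= 1) ->
  (forall n m (A : set R), measurable A ->
     P (X n m @^-1` A) = uniform_prob (@ltr01 R) A) ->
  mutually_independent P (fun nm : nat * nat => X nm.1 nm.2) ->
  let M := [set theta : R * R | objf theta = inf (range (@objf R))] in
  [/\ forall theta : R * R,
        ('E_P[fun w => lossF theta (X 1%N 1%N w)] = (objf theta)%:E)%E /\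
        ('E_P[fun w => ((lossF theta (X 1%N 1%N w)) ^+ 2)%R] < +oo)%E,
      forall x : R, 0 <= x <= 1 -> locally_lipschitz (fun theta => lossF theta x) &
      exists U : set (R * R),
        [/\ open U,
            Ck 3 (@objf R) U,
            forall C : set (R * R), C !=set0 -> compact C -> C `<=` U ->
              (ereal_sup [set 'E_P[fun w => (lossF theta (X 1%N 1%N w) ^+ 2 +
                          grad_sqnorm (fun th => lossF th (X 1%N 1%N w)) theta)%R]
                         | theta in C] < +oo)%E,
            M `&` U !=set0 /\ C1_submanifold_dim1 (M `&` U) &
            forall theta, (M `&` U) theta -> \rank (hessian (@objf R) theta) = 1%N]].
Proof.
(* Only X_{1,1} occurs in the conclusion. *)
move=> mX X01 X_uniform _ M.
have M_halfplane : M `&` halfplane = [set p | 0 < p.1 /\ p.1 * p.2 = argmin_prod R].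
  exact: argmin_objf_halfplane.
split.
- move=> theta; split.
  + exact: expectation_lossF (mX 1 1)%N (X_uniform 1 1)%N theta.
  + exact: expectation_sqr_lossF_lty (mX 1 1)%N (X01 1 1)%N theta.
- exact: lossF_locally_lipschitz.
- exists halfplane; split.
  + exact: open_halfplane.
  + exact: objf_C3.
  + move=> C _; exact: sup_expectation_sqr_lossF_grad_lty (mX 1 1)%N (X01 1 1)%N C.
  + rewrite M_halfplane; split; last exact: hyperbola_C1_submanifold.
    by exists (1, argmin_prod R); rewrite /= mul1r; split=> //; exact: ltr01.
  + by move=> theta; rewrite M_halfplane => -[]; exact: rank_hessian_objf_argmin.
Qed.
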